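(* Let $n\ge 2$ and let $\overrightarrow{K_{1,n}}$ be an orientation of the star $K_{1,n}$. Then $\overrightarrow{K_{1,n}}$ is $\{1,2\}$-antimagic if and only if $n=2$ and its center is neither a source nor a sink.
   Context: An oriented graph $\overrightarrow{G}$ is a directed graph obtained from a simple undirected graph by giving each edge one direction. For vertices $u,v$, $d(u,v)$ is the length of a shortest directed path from $u$ to $v$ ($d(u,u)=0$, and $d(u,v)=\infty$ if there is no such path). Let $\partial=\max\{d(u,v)<\infty : u,v\in V(\overrightarrow{G})\}$. A distance set is a nonempty $D\subseteq\{0,1,\dots,\partial\}$. The $D$-neighborhood of $u$ is $N_D(u)=\{v : d(u,v)\in D\}$. For a bijection $f:V(\overrightarrow{G})\to\{1,\dots,|V(\overrightarrow{G})|\}$, the $D$-weight of $u$ is $\omega_D(u)=\sum_{v\in N_D(u)} f(v)$ (empty sum $=0$). $\overrightarrow{G}$ is $D$-antimagic if $D\subseteq\{0,\dots,\partial\}$ (so $\{1,2\}$-antimagic requires $\partial\ge 2$) and there is such a bijection $f$ with all $D$-weights pairwise distinct. The center of $\overrightarrow{K_{1,n}}$ is its vertex of degree $n$; a source is a vertex of in-degree $0$ and a sink a vertex of out-degree $0$. *)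

From mathcomp Require Import all_boot all_order.
Set Implicit Arguments. Unset Strict Implicit. Unset Printing Implicit Defensive.

Section Oriented.
Variable V : finType.
Variable arc : rel V.

Definition oriented : Prop :=
  (forall u, ~~ arc u u) /\ (forall u v, ~~ (arc u v && arc v u)).

Fixpoint walkn (k : nat) (u v : V) : bool :=
  if k is k'.+1 then [exists w, arc u w && walkn k' w v] else u == v.

Definition dist_eq (u v : V) (k : nat) : bool :=
  walkn k u v && [forall j : 'I_k, ~~ walkn j u v].

Definition diam_ge (m : nat) : Prop :=
  exists u v k, (m <= k) && dist_eq u v k.

(* v \in N_D(u) ; finite distances are always < #|V| *)
Definition inND (D : pred nat) (u v : V) : bool :=
  [exists k : 'I_#|V|, D k && dist_eq u v k].

Definition Dweight (D : pred nat) (f : V -> nat) (u : V) : nat :=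
  \sum_(v | inND D u v) f v.

Definition labeling (f : V -> nat) : Prop :=
  injective f /\ (forall v, 1 <= f v <= #|V|).

Definition D_antimagic (D : pred nat) : Prop :=
  (exists k, D k) /\ (forall k, D k -> diam_ge k) /\
  exists f, labeling f /\ injective (Dweight D f).

Definition source (c : V) : Prop := forall v, ~~ arc v c.
Definition sink (c : V) : Prop := forall v, ~~ arc c v.
End Oriented.

(* arc is an orientation of the star K_{1,n} on 'I_n.+1 with center ord0 *)
Definition star_orientation (n : nat) (arc : rel 'I_n.+1) : Prop :=
  oriented arc /\
  forall u v : 'I_n.+1,
    (arc u v || arc v u) = (u != v) && ((u == ord0) || (v == ord0)).

From mathcomp Require Import all_boot all_order.
From mathcomp Require Import zify.

(* For 0 not in D, a sink has an empty D-neighbourhood, and since a source is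
   never re-entered, its D-neighbourhood is determined by its out-neighbours.
   Two equally oriented leaves of the star are therefore either two sinks or
   two sources with the single out-neighbour c, and get equal weights.  So an
   antimagic labelling orients the n leaves pairwise oppositely: n = 2, and
   the centre c has an in- and an out-arc.  Conversely, for v -> c -> w the
   labels 3, 3 - v, 3 - w on c, v, w give the weights f w in {1, 2} on c,
   f c + f w >= 4 on v and 0 on w. *)

Section DistanceNeighbourhoods.
Context {V : finType} {arc : rel V} {D : pred nat}.

Lemma walknS_arc_in k u v : walkn arc k.+1 u v -> exists w, arc w v.
Proof.
elim: k u => [|k IHk] u /=.
  by case/existsP=> w /andP[uw /eqP <-]; exists u.
by case/existsP=> w /andP[_ /IHk].
Qed.

Lemma walkn_out_eq k u u' v :
  arc u =1 arc u' -> (u == v) = (u' == v) -> walkn arc k u v = walkn arc k u' v.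
Proof. by case: k => [|k] out_eq //= _; apply: eq_existsb => w; rewrite out_eq. Qed.

Lemma dist_eq1 u v : arc u v -> u != v -> dist_eq arc u v 1.
Proof.
move=> uv neq_uv; apply/andP; split; first by apply/existsP; exists v; rewrite uv /=.
by apply/forallP => -[[|j] //= _].
Qed.

Lemma dist_eq2 u w v :
  arc u w -> arc w v -> u != v -> ~~ arc u v -> dist_eq arc u v 2.
Proof.
move=> uw wv neq_uv not_uv; apply/andP; split.
  by apply/existsP; exists w; rewrite uw /=; apply/existsP; exists v; rewrite wv /=.
apply/forallP => -[[|[|j]] //= _].
by apply/existsPn => x; apply: contra not_uv => /andP[ux /eqP <-].
Qed.

Lemma dist_eq_inND k u v :
  D k -> k < #|V| -> dist_eq arc u v k -> inND arc D u v.
Proof. by move=> Dk lt_k duv; apply/existsP; exists (Ordinal lt_k); rewrite /= Dk. Qed.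

Hypothesis D0 : ~~ D 0.

Lemma inND_distS u v : inND arc D u v -> exists k, dist_eq arc u v k.+1.
Proof. by case/existsP=> -[[|k] lt_k] /andP[Dk duv]; [case/negP: D0 | exists k]. Qed.

Lemma inND_irrefl u : ~~ inND arc D u u.
Proof.
apply/negP => /inND_distS[k /andP[_ /forallP /(_ ord0)]].
by rewrite /= eqxx.
Qed.

Lemma source_notin_ND u v : source arc v -> ~~ inND arc D u v.
Proof.
move=> src; apply/negP => /inND_distS[k /andP[/walknS_arc_in[w wv] _]].
by move: (src w); rewrite wv.
Qed.

Lemma Dweight_sink f u : sink arc u -> Dweight arc D f u = 0.
Proof.
move=> snk; apply: big1 => v /inND_distS[k /andP[/existsP[w /andP[uw _]] _]].
by move: (snk w); rewrite uw.
Qed.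

Lemma Dweight_eq_sources f u u' :
  source arc u -> source arc u' -> arc u =1 arc u' ->
  Dweight arc D f u = Dweight arc D f u'.
Proof.
move=> src src' out_eq; apply: eq_bigl => v.
have [/forallP src_v | /forallPn[w]] := boolP [forall w, ~~ arc w v].
  by rewrite !(negbTE (source_notin_ND _ _ src_v)).
rewrite negbK => wv.
have neq_v x : source arc x -> (x == v) = false.
  by move=> srcx; apply/eqP => xv; move: (srcx w); rewrite xv wv.
have walk_eq j : walkn arc j u v = walkn arc j u' v.
  by apply: walkn_out_eq; rewrite ?neq_v.
apply: eq_existsb => k; rewrite /dist_eq walk_eq.
by congr (_ && (_ && _)); apply: eq_forallb => j; rewrite walk_eq.
Qed.

End DistanceNeighbourhoods.

Definition dist12 : pred nat := fun k => (k == 1) || (k == 2).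

Section StarOrientation.
Context {n : nat} {arc : rel 'I_n.+1}.
Hypothesis star : star_orientation arc.

Lemma star_leaf_out {i y : 'I_n.+1} : i != ord0 -> arc i y -> y = ord0.
Proof.
case: star => _ adj i0 iy; move: (adj i y); rewrite iy (negbTE i0) /=.
by case/esym/andP=> _ /eqP.
Qed.

Lemma star_leaf_in {i y : 'I_n.+1} : i != ord0 -> arc y i -> y = ord0.
Proof.
case: star => _ adj i0 yi; move: (adj y i); rewrite yi (negbTE i0) orbF.
by case/esym/andP=> _ /eqP.
Qed.

Lemma star_leaf_arc {i : 'I_n.+1} : i != ord0 -> arc i ord0 = ~~ arc ord0 i.
Proof.
case: star => -[_ asym] adj i0; move: (adj i ord0) (asym i ord0).
by rewrite i0 eqxx orbT; case: (arc i ord0); case: (arc ord0 i).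
Qed.

Lemma star_leaf_sink {i : 'I_n.+1} : i != ord0 -> arc ord0 i -> sink arc i.
Proof.
move=> i0 ci y; apply/negP => iy; move: (iy).
by rewrite (star_leaf_out i0 iy) star_leaf_arc // ci.
Qed.

Lemma star_leaf_source {i : 'I_n.+1} : i != ord0 -> ~~ arc ord0 i -> source arc i.
Proof. by move=> i0 ci y; apply/negP => yi; move: ci; rewrite -(star_leaf_in i0 yi) yi. Qed.

Lemma star_leaf_source_out {i : 'I_n.+1} :
  i != ord0 -> ~~ arc ord0 i -> arc i =1 pred1 ord0.
Proof.
move=> i0 ci y; apply/idP/eqP => [/(star_leaf_out i0) // | ->].
by rewrite star_leaf_arc.
Qed.

Lemma antimagic_leaves_opposite f i j :
  injective (Dweight arc dist12 f) -> i != ord0 -> j != ord0 -> i != j ->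
  arc ord0 i != arc ord0 j.
Proof.
move=> inj i0 j0; apply: contraNN => /eqP ci_cj; apply/eqP/inj.
case ci: (arc ord0 i) ci_cj => /esym cj.
  by rewrite !Dweight_sink //; apply: star_leaf_sink.
apply: Dweight_eq_sources => //.
- exact: star_leaf_source i0 (negbT ci).
- exact: star_leaf_source j0 (negbT cj).
- by move=> y; rewrite (star_leaf_source_out i0 (negbT ci))
    (star_leaf_source_out j0 (negbT cj)).
Qed.

Lemma antimagic_star_shape :
  2 <= n -> D_antimagic arc dist12 ->
  n = 2 /\ ~ source arc ord0 /\ ~ sink arc ord0.
Proof.
move=> n_ge2 [_ [_ [f [_ inj]]]].
have opp i j := @antimagic_leaves_opposite f i j inj.
have [lt1 lt2] : 1 < n.+1 /\ 2 < n.+1 by lia.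
pose i1 := Ordinal lt1; pose i2 := Ordinal lt2.
have opp12 := opp i1 i2 isT isT isT.
split.
  apply/eqP; rewrite eqn_leq n_ge2 andbT leqNgt; apply/negP => lt3.
  pose i3 := Ordinal (lt3 : 3 < n.+1).
  move: opp12 (opp i1 i3 isT isT isT) (opp i2 i3 isT isT isT).
  by case: (arc ord0 i1); case: (arc ord0 i2); case: (arc ord0 i3).
have [a ca [b bc]] : exists2 a, arc ord0 a & exists b, arc b ord0.
  by move: opp12; case c1: (arc ord0 i1); case c2: (arc ord0 i2) => // _;
    [exists i1 => //; exists i2 | exists i2 => //; exists i1];
    rewrite star_leaf_arc // ?c1 ?c2.
by split; [move/(_ b) | move/(_ a)]; rewrite ?bc ?ca.
Qed.

End StarOrientation.

Definition reversed_label (x : 'I_3) : nat := 3 - x.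

Lemma reversed_label_labeling : labeling reversed_label.
Proof.
split; last by move=> x; rewrite card_ord /reversed_label; have := ltn_ord x; lia.
move=> x y; rewrite /reversed_label => eq_xy; apply: val_inj => /=.
by move: eq_xy; have := ltn_ord x; have := ltn_ord y; lia.
Qed.

Section TwoLeafStar.
Context {arc : rel 'I_3}.
Hypothesis star : star_orientation arc.
Context {v w : 'I_3}.
Hypotheses (vc : arc v ord0) (cw : arc ord0 w).

Let v_neq0 : v != ord0.
Proof. by apply: contraTneq vc => ->; case: star => -[loop _] _; apply: loop. Qed.

Let w_neq0 : w != ord0.
Proof. by apply: contraTneq cw => ->; case: star => -[loop _] _; apply: loop. Qed.

Let v_neq_w : v != w.
Proof. by apply: contraTneq vc => ->; rewrite star_leaf_arc // cw. Qed.

Let vertex_cases x : [|| x == ord0, x == v | x == w].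
Proof.
move: v_neq0 w_neq0 v_neq_w; rewrite -!val_eqE /=.
by have := ltn_ord x; have := ltn_ord v; have := ltn_ord w; lia.
Qed.

Let v_source : source arc v.
Proof.
by apply: (star_leaf_source star v_neq0); rewrite -(star_leaf_arc star v_neq0).
Qed.

Let w_sink : sink arc w.
Proof. exact: (star_leaf_sink star w_neq0 cw). Qed.

Let v_to_w : dist_eq arc v w 2.
Proof.
apply: dist_eq2 vc cw v_neq_w _.
by apply: contraTN w_neq0 => /(star_leaf_out star v_neq0) ->.
Qed.

Lemma inND_centre x : inND arc dist12 ord0 x = (x == w).
Proof.
case/or3P: (vertex_cases x) => /eqP->; rewrite ?eqxx.
- by rewrite eq_sym (negbTE w_neq0); apply/negbTE/inND_irrefl.
- by rewrite (negbTE v_neq_w); apply/negbTE/source_notin_ND.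
- by apply: (dist_eq_inND 1); rewrite ?card_ord // dist_eq1 // eq_sym.
Qed.

Lemma two_leaf_star_antimagic : D_antimagic arc dist12.
Proof.
split; first by exists 1.
split; first by move=> k /orP[] /eqP->; exists v, w, 2; rewrite v_to_w.
exists reversed_label; split; first exact: reversed_label_labeling.
have w_label : 0 < reversed_label w < 3.
  by rewrite /reversed_label; move: w_neq0 (ltn_ord w); rewrite -val_eqE /=; lia.
have weight_w : Dweight arc dist12 reversed_label w = 0 by apply: Dweight_sink.
have weight_centre : Dweight arc dist12 reversed_label ord0 = reversed_label w.
  by rewrite /Dweight (eq_bigl _ _ inND_centre) big_pred1_eq.
have weight_v : 3 < Dweight arc dist12 reversed_label v.
  rewrite /Dweight (bigD1 ord0) /=; last first.
    by rewrite (dist_eq_inND 1) ?card_ord ?dist_eq1.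
  rewrite (bigD1 w) /=; last first.
    by rewrite w_neq0 (dist_eq_inND 2) ?card_ord.
  by move: w_label; rewrite /reversed_label /=; lia.
move=> x y; case/or3P: (vertex_cases x) => /eqP->;
  case/or3P: (vertex_cases y) => /eqP-> //;
  rewrite ?weight_w ?weight_centre; lia.
Qed.

End TwoLeafStar.

Theorem mainTheorem5 (n : nat) (arc : rel 'I_n.+1) :
  2 <= n -> star_orientation arc ->
  (D_antimagic arc (fun k => (k == 1) || (k == 2)) <->
   n = 2 /\ ~ source arc ord0 /\ ~ sink arc ord0).
Proof.
move=> n_ge2 star; split; first exact: antimagic_star_shape.
case=> n2 [not_source not_sink]; subst n.
have [v vc] : exists v, arc v ord0.
  by apply/existsP; apply: contraT => /existsPn /not_source.
have [w cw] : exists w, arc ord0 w.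
  by apply/existsP; apply: contraT => /existsPn /not_sink.
exact: (two_leaf_star_antimagic star vc cw).
Qed.
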